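(* Let $k$ be a field of characteristic zero, $n\ge1$, $S=k[x_1,\ldots,x_n]$, and $(S,L)$ a Lie–Rinehart algebra with $L$ a free $S$-module with basis $\alpha_1,\ldots,\alpha_n$, with enveloping algebra $U$. Let $p\geq0$. (i) If $u\in F_pU$ and $\{f^I:I\in\mathbb{N}^n,|I|=p\}\subset S$ satisfy $u\equiv\sum_{|I|=p}f^I\alpha^I \pmod{F_{p-1}U}$, then $$d^0(u)\equiv\sum_{|J|=p-1}d^0\Big(\Omega^0\big((j_n+1)f^{J+e_n},(j_{n-1}+1)f^{J+e_{n-1}},\ldots,(j_1+1)f^{J+e_1}\big)\Big)\alpha^J \pmod{F_{p-2}\mathcal{X}^1},$$ where $J=(j_n,\ldots,j_1)$. (ii) If $\omega\in F_p\mathcal{X}^1$ and $\{f^I_l: I\in\mathbb{N}^n,|I|=p,l\in\{1,\ldots,n\}\}\subset S$ satisfy $\omega\equiv\sum_{l=1}^n\sum_{|I|=p}f^I_l\alpha^I\hat{x}_l\pmod{F_{p-1}\mathcal{X}^1}$, then, writing $f^I=(f^I_1,\ldots,f^I_n)$, $$d^1(\omega)\equiv\sum_{|J|=p-1}d^1\Big(\Omega^1\big((j_n+1)f^{J+e_n},\ldots,(j_1+1)f^{J+e_1}\big)\Big)\alpha^J\pmod{F_{p-2}\mathcal{X}^2}.$$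
   Context: Write $\alpha_i(s)$ for the action of $\alpha_i$ on $s\in S$. For $I=(i_n,\ldots,i_1)\in\mathbb{N}^n$ put $\alpha^I=\alpha_n^{i_n}\cdots\alpha_1^{i_1}\in U$ and $|I|=i_n+\cdots+i_1$; the $\alpha^I$ form a basis of $U$ as a left $S$-module. $F_pU$ is the $S$-span of the $\alpha^I$ with $|I|\le p$ ($F_pU=0$ for $p<0$). For $m\in\{1,\ldots,n\}$, $e_m\in\mathbb{N}^n$ is the tuple with $1$ in the entry indexed by $m$ and $0$ elsewhere (so $\alpha^{I+e_m}$ raises the exponent of $\alpha_m$ by one). Let $W=\operatorname{span}_k(x_1,\ldots,x_n)$, $\hat x_1,\ldots,\hat x_n$ the dual basis, and $\mathcal{X}^q=U\otimes_k\operatorname{Hom}_k(\Lambda^qW,k)$, whose elements are written $\sum_K u_K\,\hat x_{k_1}\wedge\cdots\wedge\hat x_{k_q}$ with $u_K\in U$ (this is the complex computing the Hochschild cohomology $H^\bullet(S,U)$ obtained from the Koszul resolution of $S$). The differentials satisfy $d^0(u)=\sum_{k=1}^n[u,x_k]\hat x_k$ and $d^1(\sum_k u_k\hat x_k)=\sum_{1\le k<l\le n}([u_k,x_l]-[u_l,x_k])\hat x_k\wedge\hat x_l$. $F_p\mathcal{X}^q$ is the $k$-span of the elements $f\alpha^I\hat x_{k_1}\wedge\cdots\wedge\hat x_{k_q}$ with $f\in S$, $|I|\le p$. For $g^1,\ldots,g^n\in S$, $\Omega^0(g^n,\ldots,g^1)=\sum_{i=1}^n g^i\alpha_i\in U$;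 for $f^1,\ldots,f^n\in S^n$ with $f^i=(f^i_1,\ldots,f^i_n)$, $\Omega^1(f^n,\ldots,f^1)=\sum_{k=1}^n\sum_{i=1}^nf^i_k\alpha_i\hat x_k\in\mathcal{X}^1$. For an element $\sum_K c_K\hat x_K$ with all $c_K\in S$, the product $(\sum_Kc_K\hat x_K)\alpha^J$ means $\sum_K c_K\alpha^J\hat x_K$. *)

From HB Require Import structures.
From mathcomp Require Import all_boot all_algebra.
From mathcomp Require Import mpoly.

Set Implicit Arguments.
Unset Strict Implicit.
Unset Printing Implicit Defensive.

Import GRing.Theory.
Local Open Scope ring_scope.

Section Defs.
Variables (k : fieldType) (n : nat) (U : nzRingType).
Local Notation S := {mpoly k[n]}.
Variables (iota : S -> U) (alpha : 'I_n -> U).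

(* alpha^I = alpha_n^{i_n} ... alpha_1^{i_1}; the index i : 'I_n stands for i+1,
   so the leftmost factor is alpha_(n-1) (paper's alpha_n). *)
Definition alphaI (I : 'X_{1..n}) : U :=
  \prod_(i < n) alpha (rev_ord i) ^+ I (rev_ord i).

(* u \in F_p U : u is an S-combination of the alpha^I with |I| <= p
   (so F_p U = 0 for p < 0). *)
Definition inFU (p : int) (u : U) : Prop :=
  exists (N : nat) (f : 'X_{1..n} -> S),
    u = \sum_(I : 'X_{1..n < N} | (mdeg I)%:Z <= p) iota (f I) * alphaI I.

(* Elements of X^1 = U (x) Hom(W,k): coefficient functions k |-> u_k of \hat x_k.
   Elements of X^2 = U (x) Hom(Lambda^2 W,k): functions (k,l) |-> u_{kl}, where only
   the entries k < l are meaningful (the others are 0 for all elements we build). *)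
Definition X1 := 'I_n -> U.
Definition X2 := 'I_n -> 'I_n -> U.

Definition inFX1 (p : int) (w : X1) : Prop := forall l, inFU p (w l).
Definition inFX2 (p : int) (w : X2) : Prop := forall a b, inFU p (w a b).

Definition xx (i : 'I_n) : U := iota 'X_i.

Definition d0 (u : U) : X1 := fun a => u * xx a - xx a * u.

Definition d1 (w : X1) : X2 := fun a b =>
  if (a < b)%N then (w a * xx b - xx b * w a) - (w b * xx a - xx a * w b) else 0.

(* Omega^0(g^n,...,g^1) = sum_i g^i alpha_i, with g i = g^{i+1}. *)
Definition Omega0 (g : 'I_n -> S) : U := \sum_(i < n) iota (g i) * alpha i.

(* Omega^1(f^n,...,f^1) = sum_k sum_i f^i_k alpha_i \hat x_k, with f i a = f^{i+1}_{a+1}. *)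
Definition Omega1 (f : 'I_n -> 'I_n -> S) : X1 :=
  fun a => \sum_(i < n) iota (f i a) * alpha i.

End Defs.

(* U is the enveloping algebra of the Lie-Rinehart algebra (S, L), L free on
   alpha_1..alpha_n, with anchor alpha_i(s) = anchor i s and brackets
   [alpha_i, alpha_j] = sum_l c i j l alpha_l; S embeds in U via iota, and the
   alpha^I form a basis of U as a left S-module (PBW). *)
Definition LREnvelope (k : fieldType) (n : nat) (U : nzRingType)
    (iota : {rmorphism {mpoly k[n]} -> U}) (alpha : 'I_n -> U)
    (anchor : 'I_n -> {mpoly k[n]} -> {mpoly k[n]})
    (c : 'I_n -> 'I_n -> 'I_n -> {mpoly k[n]}) : Prop :=
      (forall i (a : k) s t, anchor i (a *: s + t) = a *: anchor i s + anchor i t) /\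
      (forall i s t, anchor i (s * t) = s * anchor i t + anchor i s * t) /\
      (forall i j s, anchor i (anchor j s) - anchor j (anchor i s)
                     = \sum_(l < n) c i j l * anchor l s) /\
      (forall i s, alpha i * iota s - iota s * alpha i = iota (anchor i s)) /\
      (forall i j, alpha i * alpha j - alpha j * alpha i
                   = \sum_(l < n) iota (c i j l) * alpha l) /\
      (forall u : U, exists p : int, inFU iota alpha p u) /\
      (forall (N : nat) (f : 'X_{1..n} -> {mpoly k[n]}),
          \sum_(I : 'X_{1..n < N}) iota (f I) * alphaI alpha I = 0 ->
          forall I : 'X_{1..n < N}, f I = 0).

(* Modulo lower filtration degree, U behaves like the commutative polynomial
   ring S[alpha_1, ..., alpha_n]: permuting the letters of a word in the alpha_i
   only changes it by words of smaller length (commutators of alphas lie in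
   F_1 U), and commuting with an element t of S lowers the degree by one.  So
   F_p U is also the S-span of all words of length at most p, and an induction
   on the word gives the leading part of [alpha^J, t], namely
   sum_m J_m alpha_m(t) alpha^(J - e_m), modulo F_(|J|-2) U.  Summing this over
   the leading terms f^I alpha^I of u and regrouping by J = I - e_m turns it
   into the terms [Omega^0(...), t] alpha^J of (i); d^1 is a difference of two
   such commutators, which gives (ii). *)

From mathcomp Require Import all_boot all_order all_algebra.
From mathcomp Require Import mpoly zify.
Import Order.TTheory GRing.Theory Num.Theory.

Set Implicit Arguments.
Unset Strict Implicit.

Local Open Scope ring_scope.

Section Words.
Variable n : nat.

Definition word_of_mnm (J : 'X_{1..n}) : seq 'I_n :=
  \big[cat/[::]]_(i < n) nseq (J (rev_ord i)) (rev_ord i).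

Definition mnm_of_word (w : seq 'I_n) : 'X_{1..n} :=
  [multinom count_mem i w | i < n].

Lemma count_word_of_mnm J x : count_mem x (word_of_mnm J) = J x.
Proof.
rewrite /word_of_mnm.
rewrite (big_morph (count_mem x) (count_cat _) (erefl : count_mem x [::] = 0%N)).
rewrite (reindex_inj rev_ord_inj) (bigD1 x) //= big1 => [|i /negbTE ne_ix].
  by rewrite rev_ordK count_nseq /= eqxx mul1n addn0.
by rewrite rev_ordK count_nseq /= ne_ix.
Qed.

Lemma word_of_mnmK : cancel word_of_mnm mnm_of_word.
Proof. by move=> J; apply/mnmP => x; rewrite mnmE count_word_of_mnm. Qed.

Lemma size_word_of_mnm J : size (word_of_mnm J) = mdeg J.
Proof.
rewrite /word_of_mnm (big_morph size (@size_cat _) (erefl : size [::] = 0%N)) mdegE.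
rewrite [RHS](reindex_inj rev_ord_inj).
by apply: eq_bigr => i _; rewrite size_nseq.
Qed.

Lemma perm_word_of_mnm w : perm_eq w (word_of_mnm (mnm_of_word w)).
Proof. by apply/allP => x _ /=; rewrite count_word_of_mnm mnmE. Qed.

Lemma mdeg_mnm_of_word w : mdeg (mnm_of_word w) = size w.
Proof. by rewrite -size_word_of_mnm -(perm_size (perm_word_of_mnm w)). Qed.

Lemma mnm_of_word_cons a w : mnm_of_word (a :: w) = (mnm_of_word w + U_(a))%MM.
Proof. by apply/mnmP => x; rewrite !mnmE /= addnC. Qed.

Lemma mdeg_subU (m : 'I_n) (J : 'X_{1..n}) :
  (0 < J m)%N -> (mdeg (J - U_(m))%MM).+1 = mdeg J.
Proof.
by move=> Jm_gt0; rewrite -addn1 -(mdeg1 m) -mdegD submK // lep1mP -lt0n.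
Qed.

Lemma sum_mdeg_shift (V : nmodType) p m (F : 'X_{1..n} -> V) :
  \sum_(I : 'X_{1..n < p.+1} | mdeg I == p) F I *+ I m
  = \sum_(J : 'X_{1..n < p} | (mdeg J).+1 == p) F (J + U_(m))%MM *+ (J m).+1.
Proof.
rewrite (bigID (fun I : 'X_{1..n < p.+1} => 0 < I m)%N) /=.
rewrite [X in _ + X]big1 ?addr0 => [|I /andP[_]]; last first.
  by rewrite lt0n negbK => /eqP ->; rewrite mulr0n.
have shift_bounded (J : 'X_{1..n < p}) : (mdeg (J + U_(m))%MM < p.+1)%N.
  by rewrite mdegD mdeg1 addn1 ltnS bmdeg.
pose unshift (I : 'X_{1..n < p.+1}) : option 'X_{1..n < p} := insub (I - U_(m))%MM.
rewrite (reindex_omap (fun J => BMultinom (shift_bounded J)) unshift).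
  apply: eq_big => [J|J _]; last by rewrite /= mnmE mnm1E eqxx addn1.
  rewrite /= mdegD mdeg1 addn1 mnmE mnm1E eqxx addn1 ltn0Sn andbT.
  by rewrite /unshift /= addmK valK eqxx andbT.
move=> I /andP[/eqP degI Im_gt0].
have deg_sub : (mdeg (I - U_(m))%MM < p)%N by rewrite -ltnS mdeg_subU ?degI.
rewrite /unshift insubT /=; congr Some; apply: val_inj.
by rewrite /= submK // lep1mP -lt0n.
Qed.

End Words.

Section Envelope.
Variables (k : fieldType) (n : nat) (U : nzRingType).
Variable iota : {rmorphism {mpoly k[n]} -> U}.
Variables (alpha : 'I_n -> U) (anchor : 'I_n -> {mpoly k[n]} -> {mpoly k[n]}).
Variable c : 'I_n -> 'I_n -> 'I_n -> {mpoly k[n]}.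

Definition lie (x y : U) : U := x * y - y * x.

Lemma lieDl x y z : lie (x + y) z = lie x z + lie y z.
Proof. by rewrite /lie mulrDl mulrDr opprD addrACA. Qed.

Lemma lieNl x z : lie (- x) z = - lie x z.
Proof. by rewrite /lie mulNr mulrN opprK opprB addrC. Qed.

Lemma lieBl x y z : lie (x - y) z = lie x z - lie y z.
Proof. by rewrite lieDl lieNl. Qed.

Lemma lie_suml (I : Type) (r : seq I) (P : pred I) (F : I -> U) z :
  lie (\sum_(i <- r | P i) F i) z = \sum_(i <- r | P i) lie (F i) z.
Proof. by rewrite /lie mulr_suml mulr_sumr -sumrB. Qed.

Lemma lieMl x y z : lie (x * y) z = x * lie y z + lie x z * y.
Proof. by rewrite /lie mulrBr mulrBl !mulrA addrA subrK. Qed.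

Lemma lieMr x y z : lie x (y * z) = lie x y * z + y * lie x z.
Proof. by rewrite /lie mulrBr mulrBl !mulrA addrA subrK. Qed.

Lemma iotaC s t : iota s * iota t = iota t * iota s.
Proof. by rewrite -!rmorphM mulrC. Qed.

Lemma lie_iotaMl s u t : lie (iota s * u) (iota t) = iota s * lie u (iota t).
Proof. by rewrite lieMl {2}/lie iotaC subrr mul0r addr0. Qed.

Hypothesis lie_alpha_iota : forall i s, lie (alpha i) (iota s) = iota (anchor i s).
Hypothesis lie_alpha : forall i j,
  lie (alpha i) (alpha j) = \sum_(l < n) iota (c i j l) * alpha l.

Lemma alpha_iotaE a s : alpha a * iota s = iota s * alpha a + iota (anchor a s).
Proof. by rewrite -lie_alpha_iota addrC subrK. Qed.

Section Span.
Variables (T : Type) (deg : T -> nat) (mon : T -> U).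

Inductive Fspan (p : int) : U -> Prop :=
| Fspan0 : Fspan p 0
| Fspan_term s x : (deg x)%:Z <= p -> Fspan p (iota s * mon x)
| FspanD u v : Fspan p u -> Fspan p v -> Fspan p (u + v).

Lemma Fspan_le p q u : p <= q -> Fspan p u -> Fspan q u.
Proof.
move=> le_pq; elim=> [|s x le_xp|u1 u2 _ h1 _ h2]; first exact: Fspan0.
  by apply: Fspan_term; apply: le_trans le_pq.
exact: FspanD.
Qed.

Lemma FspanN p u : Fspan p u -> Fspan p (- u).
Proof.
elim=> [|s x le_xp|u1 u2 _ h1 _ h2]; first by rewrite oppr0; apply: Fspan0.
  by rewrite -mulNr -rmorphN; apply: Fspan_term.
by rewrite opprD; apply: FspanD.
Qed.

Lemma FspanB p u v : Fspan p u -> Fspan p v -> Fspan p (u - v).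
Proof. by move=> hu /FspanN; apply: FspanD. Qed.

Lemma Fspan_sum p (I : Type) (r : seq I) (P : pred I) (F : I -> U) :
  (forall i, P i -> Fspan p (F i)) -> Fspan p (\sum_(i <- r | P i) F i).
Proof. by move=> hF; apply: big_ind => //; [apply: Fspan0 | apply: FspanD]. Qed.

Lemma Fspan_muln p u m : Fspan p u -> Fspan p (u *+ m).
Proof.
move=> hu; elim: m => [|m IH]; first by rewrite mulr0n; apply: Fspan0.
by rewrite mulrS; apply: FspanD.
Qed.

Lemma Fspan_iotaMl p t u : Fspan p u -> Fspan p (iota t * u).
Proof.
elim=> [|s x le_xp|u1 u2 _ h1 _ h2]; first by rewrite mulr0; apply: Fspan0.
  by rewrite mulrA -rmorphM; apply: Fspan_term.
by rewrite mulrDr; apply: FspanD.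
Qed.

Lemma Fspan_neg_eq0 p u : p < 0 -> Fspan p u -> u = 0.
Proof.
move=> p_lt0; elim=> [//|s x le_xp|u1 u2 _ -> _ ->]; last by rewrite addr0.
by have := le_lt_trans le_xp p_lt0.
Qed.

End Span.

Definition alphaw (w : seq 'I_n) : U := \prod_(a <- w) alpha a.

Local Notation Fword := (Fspan size alphaw).
Local Notation Fmono := (Fspan mdeg (alphaI alpha)).

Definition eqmodF (p : int) (u v : U) : Prop := Fword p (u - v).

Lemma eqmodF_refl p u : eqmodF p u u.
Proof. by rewrite /eqmodF subrr; apply: Fspan0. Qed.

Lemma eqmodF_trans p v u w : eqmodF p u v -> eqmodF p v w -> eqmodF p u w.
Proof. by move=> huv hvw; rewrite /eqmodF -[u](subrK v) -addrA; apply: FspanD. Qed.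

Lemma eqmodF_le p q u v : p <= q -> eqmodF p u v -> eqmodF q u v.
Proof. exact: Fspan_le. Qed.

Lemma eqmodFD p u1 u2 v1 v2 :
  eqmodF p u1 v1 -> eqmodF p u2 v2 -> eqmodF p (u1 + u2) (v1 + v2).
Proof. by move=> h1 h2; rewrite /eqmodF opprD addrACA; apply: FspanD. Qed.

Lemma eqmodFB p u1 u2 v1 v2 :
  eqmodF p u1 v1 -> eqmodF p u2 v2 -> eqmodF p (u1 - u2) (v1 - v2).
Proof. by move=> h1 h2; rewrite /eqmodF opprD addrACA -opprD; apply: FspanB. Qed.

Lemma eqmodF_sum p (I : Type) (r : seq I) (P : pred I) (F G : I -> U) :
  (forall i, P i -> eqmodF p (F i) (G i)) ->
  eqmodF p (\sum_(i <- r | P i) F i) (\sum_(i <- r | P i) G i).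
Proof. by move=> hFG; rewrite /eqmodF -sumrB; apply: Fspan_sum. Qed.

Lemma eqmodF_muln p u v m : eqmodF p u v -> eqmodF p (u *+ m) (v *+ m).
Proof. by rewrite /eqmodF -mulrnBl; apply: Fspan_muln. Qed.

Lemma eqmodF_iotaMl p t u v : eqmodF p u v -> eqmodF p (iota t * u) (iota t * v).
Proof. by rewrite /eqmodF -mulrBr; apply: Fspan_iotaMl. Qed.

Lemma alphaw_nil : alphaw [::] = 1.
Proof. exact: big_nil. Qed.

Lemma alphaw_cons a w : alphaw (a :: w) = alpha a * alphaw w.
Proof. exact: big_cons. Qed.

Lemma alphaw_cat w1 w2 : alphaw (w1 ++ w2) = alphaw w1 * alphaw w2.
Proof. exact: big_cat. Qed.

Lemma alphaw_word_of_mnm J : alphaw (word_of_mnm J) = alphaI alpha J.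
Proof.
rewrite /word_of_mnm (big_morph alphaw alphaw_cat alphaw_nil).
apply: eq_bigr => i _; elim: (J _) => [|m IH]; first by rewrite alphaw_nil.
by rewrite alphaw_cons IH exprS.
Qed.

Lemma Fword_alphaw w : Fword (size w) (alphaw w).
Proof. by rewrite -[alphaw w]mul1r -(rmorph1 iota); apply: Fspan_term. Qed.

Lemma Fword_alphaI J : Fword (mdeg J) (alphaI alpha J).
Proof. by rewrite -alphaw_word_of_mnm -size_word_of_mnm; apply: Fword_alphaw. Qed.

Lemma Fword_alphaMl p a u : Fword p u -> Fword (p + 1) (alpha a * u).
Proof.
elim=> [|s w le_wp|u1 u2 _ h1 _ h2]; first by rewrite mulr0; apply: Fspan0.
  rewrite mulrA alpha_iotaE mulrDl -mulrA -alphaw_cons.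
  by apply: FspanD; apply: Fspan_term => /=; lia.
by rewrite mulrDr; apply: FspanD.
Qed.

Lemma Fword_alphawMl p w u : Fword p u -> Fword (p + (size w)%:Z) (alphaw w * u).
Proof.
elim: w p u => [|a w IH] p u hu; first by rewrite alphaw_nil mul1r addr0.
by rewrite alphaw_cons -mulrA; apply: Fspan_le (Fword_alphaMl _ (IH _ _ hu)) => /=; lia.
Qed.

Lemma FwordM p q u v : Fword p u -> Fword q v -> Fword (p + q) (u * v).
Proof.
move=> hu hv; elim: hu => [|s w le_wp|u1 u2 _ h1 _ h2].
- by rewrite mul0r; apply: Fspan0.
- rewrite -mulrA; apply/Fspan_iotaMl/(Fspan_le _ (Fword_alphawMl w hv)); lia.
- by rewrite mulrDl; apply: FspanD.
Qed.

Lemma Fword_lie_alpha_alphaw a w : Fword (size w) (lie (alpha a) (alphaw w)).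
Proof.
elim: w => [|b w IH].
  by rewrite alphaw_nil /lie mulr1 mul1r subrr; apply: Fspan0.
rewrite alphaw_cons lieMr lie_alpha mulr_suml.
apply: FspanD; last by apply: Fspan_le (Fword_alphaMl b IH) => /=; lia.
by apply: Fspan_sum => l _; rewrite -mulrA -alphaw_cons; apply: Fspan_term.
Qed.

Lemma perm_alphaw w w' :
  perm_eq w w' -> eqmodF ((size w)%:Z - 1) (alphaw w) (alphaw w').
Proof.
rewrite /eqmodF; elim: w w' => [|a w IH] w' perm_ww'.
  by move: perm_ww'; rewrite perm_sym => /perm_nilP ->; rewrite subrr; apply: Fspan0.
have a_in : a \in w' by rewrite -(perm_mem perm_ww') mem_head.
move: perm_ww'; case/splitPr: a_in => w1 w2 perm_ww'.
have perm_w : perm_eq w (w1 ++ w2).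
  rewrite -(perm_cons a) (perm_trans perm_ww') //.
  exact/permPl/(perm_catCA w1 [:: a] w2).
have -> : alphaw (a :: w) - alphaw (w1 ++ a :: w2)
    = alpha a * (alphaw w - alphaw (w1 ++ w2))
      + lie (alpha a) (alphaw w1) * alphaw w2.
  by rewrite !alphaw_cat !alphaw_cons /lie mulrBr mulrBl !mulrA addrA subrK.
have size_w : size w = (size w1 + size w2)%N by rewrite (perm_size perm_w) size_cat.
apply: FspanD; first by apply: Fspan_le (Fword_alphaMl a (IH _ perm_w)) => /=; lia.
apply: Fspan_le (FwordM (Fword_lie_alpha_alphaw a w1) (Fword_alphaw w2)) => /=.
by rewrite size_w -addn1 !PoszD addrK.
Qed.

Lemma Fword_lie_alphaw_iota w t : Fword ((size w)%:Z - 1) (lie (alphaw w) (iota t)).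
Proof.
elim: w => [|a w IH].
  by rewrite alphaw_nil /lie mulr1 mul1r subrr; apply: Fspan0.
rewrite alphaw_cons lieMl lie_alpha_iota.
apply: FspanD; first by apply: Fspan_le (Fword_alphaMl a IH) => /=; lia.
by apply/Fspan_iotaMl/(Fspan_le _ (Fword_alphaw w)) => /=; lia.
Qed.

Lemma Fword_lie_iota p u t : Fword p u -> Fword (p - 1) (lie u (iota t)).
Proof.
elim=> [|s w le_wp|u1 u2 _ h1 _ h2].
- by rewrite /lie mul0r mulr0 subrr; apply: Fspan0.
- rewrite lie_iotaMl; apply/Fspan_iotaMl.
  by apply: Fspan_le (Fword_lie_alphaw_iota w t); lia.
- by rewrite lieDl; apply: FspanD.
Qed.

Lemma eqmodF_alphaMl p a u v :
  eqmodF p u v -> eqmodF (p + 1) (alpha a * u) (alpha a * v).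
Proof. by rewrite /eqmodF -mulrBr; apply: Fword_alphaMl. Qed.

Lemma alphaw_alphaI w :
  eqmodF ((size w)%:Z - 1) (alphaw w) (alphaI alpha (mnm_of_word w)).
Proof. by rewrite -alphaw_word_of_mnm; apply/perm_alphaw/perm_word_of_mnm. Qed.

Lemma alpha_alphaI a K :
  eqmodF (mdeg K) (alpha a * alphaI alpha K) (alphaI alpha (K + U_(a))%MM).
Proof.
have := alphaw_alphaI (a :: word_of_mnm K).
rewrite alphaw_cons alphaw_word_of_mnm mnm_of_word_cons word_of_mnmK.
by apply: eqmodF_le; rewrite /= size_word_of_mnm; lia.
Qed.

Lemma Fword_Fmono p u : Fword p u -> Fmono p u.
Proof.
have [m lt_pm] : exists m : nat, p < m%:Z by exists `|p|%N.+1; lia.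
elim: m p u lt_pm => [|m IH] p u lt_pm hu.
  by rewrite (Fspan_neg_eq0 lt_pm hu); apply: Fspan0.
elim: hu lt_pm => [|s w le_wp|u1 u2 _ h1 _ h2] lt_pm.
- exact: Fspan0.
- rewrite -[alphaw w](subrK (alphaI alpha (mnm_of_word w))) mulrDr.
  apply: FspanD; last by apply: Fspan_term; rewrite mdeg_mnm_of_word.
  by apply/Fspan_iotaMl/(Fspan_le _ (IH _ _ _ (alphaw_alphaI w))); lia.
- by apply: FspanD; [apply: h1 | apply: h2].
Qed.

Lemma Fmono_sum (q : nat) u : Fmono q%:Z u ->
  exists f : 'X_{1..n} -> {mpoly k[n]},
    u = \sum_(I : 'X_{1..n < q.+1}) iota (f I) * alphaI alpha I.
Proof.
elim=> [|s J le_Jq|u1 u2 _ [f1 ->] _ [f2 ->]].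
- by exists (fun=> 0); rewrite big1 // => I _; rewrite rmorph0 mul0r.
- have lt_Jq : (mdeg J < q.+1)%N by rewrite ltnS -lez_nat.
  exists (fun I => if I == J then s else 0).
  rewrite (bigD1 (BMultinom lt_Jq)) //= eqxx big1 ?addr0 // => I neIJ.
  by rewrite ifN ?rmorph0 ?mul0r.
- exists (fun I => f1 I + f2 I); rewrite -big_split /=.
  by apply: eq_bigr => I _; rewrite rmorphD mulrDl.
Qed.

Lemma Fmono_inFU p u : Fmono p u -> inFU iota alpha p u.
Proof.
case: (ltrP p 0) => [p_lt0 /(Fspan_neg_eq0 p_lt0) ->|].
  by exists 0%N, (fun=> 0); rewrite big1 // => I _; rewrite rmorph0 mul0r.
case: p => [q _ /Fmono_sum [f ->]|//]; exists q.+1, f.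
by apply: eq_bigl => I; rewrite lez_nat -ltnS bmdeg.
Qed.

Lemma inFU_Fword p u : inFU iota alpha p u <-> Fword p u.
Proof.
split=> [[N [f ->]]|/Fword_Fmono/Fmono_inFU //].
apply: Fspan_sum => I le_Ip.
by rewrite -alphaw_word_of_mnm; apply: Fspan_term; rewrite size_word_of_mnm.
Qed.

Definition comm_symbol (t : {mpoly k[n]}) (J : 'X_{1..n}) : U :=
  \sum_(m < n) iota (anchor m t) * alphaI alpha (J - U_(m))%MM *+ J m.

Lemma comm_symbol_addU t J a :
  comm_symbol t (J + U_(a))%MM
  = \sum_(m < n) iota (anchor m t) * alphaI alpha (J - U_(m) + U_(a))%MM *+ J m
    + iota (anchor a t) * alphaI alpha J.
Proof.
rewrite /comm_symbol; under eq_bigr => m _ do rewrite mnmDE mnm1E mulrnDr.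
rewrite big_split /=; congr (_ + _).
  apply: eq_bigr => m _.
  case: (posnP (J m)) => [-> | Jm_gt0]; first by rewrite !mulr0n.
  by rewrite [(J - _ + _)%MM]addmC addmBA ?lep1mP -?lt0n // [(U_(a) + J)%MM]addmC.
rewrite (bigD1 a) //= eqxx addmK big1 ?addr0 // => m ne_ma.
by rewrite eq_sym (negbTE ne_ma).
Qed.

Lemma alpha_iota_alphaI a s K :
  eqmodF (mdeg K) (alpha a * (iota s * alphaI alpha K))
                  (iota s * alphaI alpha (K + U_(a))%MM).
Proof.
rewrite mulrA alpha_iotaE mulrDl -mulrA -[X in eqmodF _ _ X]addr0.
apply: eqmodFD; first exact/eqmodF_iotaMl/alpha_alphaI.
by rewrite /eqmodF subr0; apply/Fspan_iotaMl/Fword_alphaI.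
Qed.

Lemma lie_alphaw_iota w t :
  eqmodF ((size w)%:Z - 2) (lie (alphaw w) (iota t))
         (comm_symbol t (mnm_of_word w)).
Proof.
elim: w => [|a w IH].
  rewrite alphaw_nil /lie mulr1 mul1r subrr /comm_symbol big1 => [|m _].
    exact: eqmodF_refl.
  by rewrite mnmE mulr0n.
rewrite alphaw_cons lieMl lie_alpha_iota mnm_of_word_cons comm_symbol_addU.
set J := mnm_of_word w; apply: eqmodFD; last first.
  by apply/eqmodF_iotaMl/(eqmodF_le _ (alphaw_alphaI w)) => /=; lia.
apply: eqmodF_trans (eqmodF_le _ (eqmodF_alphaMl a IH)) _ => /=; first lia.
rewrite /comm_symbol mulr_sumr; apply: eqmodF_sum => m _; rewrite mulrnAr.
case: (posnP (J m)) => [-> | Jm_gt0]; first by rewrite !mulr0n; apply: eqmodF_refl.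
apply/eqmodF_muln/(eqmodF_le _ (alpha_iota_alphaI _ _ _)).
by have := mdeg_subU Jm_gt0; rewrite /J mdeg_mnm_of_word /=; lia.
Qed.

Lemma lie_alphaI_iota J t :
  eqmodF ((mdeg J)%:Z - 2) (lie (alphaI alpha J) (iota t)) (comm_symbol t J).
Proof.
have := lie_alphaw_iota (word_of_mnm J) t.
by rewrite alphaw_word_of_mnm size_word_of_mnm word_of_mnmK.
Qed.

Lemma lie_Omega0_iota g t :
  lie (Omega0 iota alpha g) (iota t) = \sum_(i < n) iota (g i) * iota (anchor i t).
Proof.
by rewrite /Omega0 lie_suml; apply: eq_bigr => i _; rewrite lie_iotaMl lie_alpha_iota.
Qed.

Lemma sum_comm_symbol p (f : 'X_{1..n} -> {mpoly k[n]}) t :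
  \sum_(I : 'X_{1..n < p.+1} | mdeg I == p) iota (f I) * comm_symbol t I
  = \sum_(J : 'X_{1..n < p} | (mdeg J).+1 == p)
      lie (Omega0 iota alpha (fun i => (J i).+1%:R * f (J + U_(i))%MM)) (iota t)
      * alphaI alpha J.
Proof.
rewrite /comm_symbol; under eq_bigr => I _ do rewrite mulr_sumr.
under [RHS]eq_bigr => J _ do rewrite lie_Omega0_iota mulr_suml.
rewrite exchange_big [RHS]exchange_big /=; apply: eq_bigr => m _.
under eq_bigr => I _ do rewrite mulrnAr mulrA.
rewrite (sum_mdeg_shift p m (fun I =>
  iota (f I) * iota (anchor m t) * alphaI alpha (I - U_(m))%MM)).
apply: eq_bigr => J _.
by rewrite addmK rmorphM /= rmorph_nat mulr_natl !mulrnAl.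
Qed.

Lemma lie_iota_leading p (f : 'X_{1..n} -> {mpoly k[n]}) u t :
  eqmodF (p%:Z - 1) u
    (\sum_(I : 'X_{1..n < p.+1} | mdeg I == p) iota (f I) * alphaI alpha I) ->
  eqmodF (p%:Z - 2) (lie u (iota t))
    (\sum_(J : 'X_{1..n < p} | (mdeg J).+1 == p)
       lie (Omega0 iota alpha (fun i => (J i).+1%:R * f (J + U_(i))%MM)) (iota t)
       * alphaI alpha J).
Proof.
move=> leading_u; set V := \sum_(I | _) _ in leading_u.
rewrite -sum_comm_symbol; apply: (eqmodF_trans (v := lie V (iota t))).
  by rewrite /eqmodF -lieBl; apply: Fspan_le (Fword_lie_iota t leading_u); lia.
rewrite /V lie_suml; apply: eqmodF_sum => I /eqP deg_I; rewrite lie_iotaMl.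
by apply: eqmodF_iotaMl; have := lie_alphaI_iota I t; rewrite deg_I.
Qed.

End Envelope.

Theorem proposition2p4 (k : fieldType) (n : nat) (U : nzRingType)
    (iota : {rmorphism {mpoly k[n]} -> U}) (alpha : 'I_n -> U)
    (anchor : 'I_n -> {mpoly k[n]} -> {mpoly k[n]})
    (c : 'I_n -> 'I_n -> 'I_n -> {mpoly k[n]}) :
  [pchar k] =i pred0 -> (0 < n)%N ->
  LREnvelope iota alpha anchor c ->
  forall p : nat,
  (* (i) *)
  (forall (u : U) (f : 'X_{1..n} -> {mpoly k[n]}),
     inFU iota alpha p%:Z u ->
     inFU iota alpha (p%:Z - 1)
       (u - \sum_(I : 'X_{1..n < p.+1} | mdeg I == p)
               iota (f I) * alphaI alpha I) ->
     inFX1 iota alpha (p%:Z - 2)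
       (fun l => d0 iota u l
          - \sum_(J : 'X_{1..n < p} | (mdeg J).+1 == p)
               d0 iota (Omega0 iota alpha
                          (fun i => (J i).+1%:R * f (J + U_(i))%MM)) l
               * alphaI alpha J)) /\
  (* (ii) *)
  (forall (w : 'I_n -> U) (f : 'X_{1..n} -> 'I_n -> {mpoly k[n]}),
     inFX1 iota alpha p%:Z w ->
     inFX1 iota alpha (p%:Z - 1)
       (fun l => w l - \sum_(I : 'X_{1..n < p.+1} | mdeg I == p)
                         iota (f I l) * alphaI alpha I) ->
     inFX2 iota alpha (p%:Z - 2)
       (fun a b => d1 iota w a b
          - \sum_(J : 'X_{1..n < p} | (mdeg J).+1 == p)
               d1 iota (Omega1 iota alpha
                          (fun i l => (J i).+1%:R * f (J + U_(i))%MM l)) a b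
               * alphaI alpha J)).
Proof.
move=> _ _ [_ [_ [_ [lie_alpha_iota [lie_alpha _]]]]] p.
have FU := inFU_Fword lie_alpha_iota lie_alpha.
have leading := lie_iota_leading lie_alpha_iota lie_alpha.
split=> [u f _ /FU leading_u l | w f _ leading_w a b]; apply/FU.
  exact: leading.
rewrite /d1; case: (a < b)%N; last first.
  by rewrite big1 ?subrr => [|J _]; [apply: Fspan0 | rewrite mul0r].
under eq_bigr => J _ do rewrite mulrBl; rewrite sumrB.
by apply: eqmodFB; apply: (leading _ (f ^~ _)); apply/FU.
Qed.
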